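(* Let $\mathfrak R$ be an iterated graph system satisfying (GR1)–(GR3), with replacement graphs $G_k$. Let $\theta=[w^{(1)},\dots,w^{(l)}]$ be a path in $G_n$ and fix $v^{(1)}\in W_m$. Then there is at most one path $\hat\theta$ in $G_{n+m}$ of the form $\hat\theta=[w^{(1)}v^{(1)},\dots,w^{(l)}v^{(l)}]$ with $v^{(2)},\dots,v^{(l)}\in W_m$.
   Context: Graphs: $(V,E)$, $V$ finite non-empty, $E\subseteq V\times V$, $(x,y)\in E\Rightarrow(y,x)\notin E$; $\{x,y\}\in E$ means either orientation. A path is a sequence $[x_1,\dots,x_k]$ with $\{x_i,x_{i+1}\}\in E$. An iterated graph system consists of a connected graph $G_1=(S,E)$, a finite set $\mathcal T$ of types, a surjective typing $\mathfrak t:E\to\mathcal T$ and non-empty gluing rules $I_t\subseteq S\times S$. With $W_m=S^m$, $[w]_k=w_1\cdots w_k$ and $wv$ the concatenation of words, the replacement graphs $G_m=(W_m,E_m)$ are defined recursively: $(w,v)\in E_{m+1}$ iff either (1) $[w]_m=[v]_m$ and $(w_{m+1},v_{m+1})\in E$ (type $\mathfrak t(w_{m+1},v_{m+1})$), or (2) $([w]_m,[v]_m)\in E_m$ and $(w_{m+1},v_{m+1})\in I_{\mathfrak t([w]_m,[v]_m)}$ (type $\mathfrak t([w]_m,[v]_m)$). (GR1): for each $t$ and $w\in S$ there is at most one $v$ with $(w,v)\in I_t$ and at most one $v$ with $(v,w)\in I_t$. (GR2): for each $t$ and $w\in S$, $w$ cannot both have some $v$ with $(w,v)\in I_t$ and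 an outgoing edge of $G_1$ of type $t$, nor both have some $v$ with $(v,w)\in I_t$ and an incoming edge of $G_1$ of type $t$. (GR3): the sets of first and second coordinates of $I_t$ are disjoint for each $t$. *)

From mathcomp Require Import all_boot.
Set Implicit Arguments. Unset Strict Implicit. Unset Printing Implicit Defensive.

Section IGS.
Variables (S T : finType) (E : rel S) (typ : S -> S -> T) (I : T -> rel S).

Definition is_IGS : Prop :=
  [/\ (forall x y, E x y -> ~~ E y x),
      (forall x y, connect (fun a b => E a b || E b a) x y),
      (forall t, exists a b, E a b /\ typ a b = t)
    & (forall t, exists a b, I t a b)].

Definition GR1 : Prop :=
  (forall t w v v', I t w v -> I t w v' -> v = v') /\
  (forall t w v v', I t v w -> I t v' w -> v = v').

Definition GR2 : Prop := forall t w,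
  ~ ((exists v, I t w v) /\ (exists u, E w u /\ typ w u = t)) /\
  ~ ((exists v, I t v w) /\ (exists u, E u w /\ typ u w = t)).

Definition GR3 : Prop := forall t x,
  ~ ((exists y, I t x y) /\ (exists y, I t y x)).

(* gedge k w v = Some t  iff  (w,v) is an edge of the replacement graph G_k
   (words of length k over S) of type t.  Words are seqs; the last letter of a
   word of length m+1 is w_(m+1) and the rest is the prefix [w]_m. *)
Fixpoint gedge (k : nat) (w v : seq S) : option T :=
  match k with
  | 0 => None
  | k'.+1 =>
    if (size w != k) || (size v != k) then None else
    match rev w, rev v with
    | a :: rw, b :: rv =>
      let pw := rev rw in let pv := rev rv in
      if pw == pv then (if E a b then Some (typ a b) else None)
      else match gedge k' pw pv with
           | Some t => if I t a b then Some t else None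
           | None => None
           end
    | _, _ => None
    end
  end.

Definition Gedge (k : nat) (w v : seq S) : bool := gedge k w v != None.

Definition Gadj (k : nat) (w v : seq S) : bool := Gedge k w v || Gedge k v w.

Definition Gpath (k : nat) (p : seq (seq S)) : bool :=
  all (fun w => size w == k) p && sorted (Gadj k) p.

End IGS.

(* A lifted edge (w v, w' u) of G_(n+m) with w <> w' can only arise from
   rule (2), applied m times: (w, w') is then an edge of G_n of some type t
   and v, u are related letter by letter by I_t.  Since G_n has no
   antiparallel edges, the orientation of (w, w') fixes the direction in
   which I_t is read, and (GR1) says I_t is a partial injection, so u is
   determined by v.  Walking along theta determines v(2), v(3), ... in turn. *)
From mathcomp Require Import all_boot.
Set Implicit Arguments. Unset Strict Implicit.

Lemma all2_rcons (A B : Type) (r : A -> B -> bool) s t x y :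
  size s = size t -> all2 r (rcons s x) (rcons t y) = all2 r s t && r x y.
Proof.
elim: s t => [|a s IH] [|b t] //=; first by rewrite andbT.
by case=> st; rewrite IH // andbA.
Qed.

Lemma all2_functional (A B : Type) (r : A -> B -> bool) s t t' :
  (forall x y y', r x y -> r x y' -> y = y') ->
  all2 r s t -> all2 r s t' -> t = t'.
Proof.
move=> rfun; elim: s t t' => [|x s IH] [|y t] [|y' t'] //=.
by move=> /andP[rxy st] /andP[rxy' st']; rewrite (rfun _ _ _ rxy rxy') (IH _ _ st st').
Qed.

Lemma all2_flip (A B : Type) (r : A -> B -> bool) s t :
  all2 r s t = all2 (fun y x => r x y) t s.
Proof. by elim: s t => [|x s IH] [|y t] //=; rewrite IH. Qed.

Section LiftedEdges.
Variables (S T : finType) (E : rel S) (typ : S -> S -> T) (I : T -> rel S).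
Local Notation gedge := (gedge E typ I).
Local Notation Gadj := (Gadj E typ I).
Local Notation Gpath := (Gpath E typ I).

Lemma gedge_rcons k w w' a b : size w = k -> size w' = k -> w != w' ->
  gedge k.+1 (rcons w a) (rcons w' b) =
  if gedge k w w' is Some t then (if I t a b then Some t else None) else None.
Proof.
move=> sw sw' ww'.
by rewrite /= !size_rcons sw sw' eqxx !rev_rcons /= !revK (negbTE ww').
Qed.

Lemma gedge_cat k w w' v v' t : size w = k -> size w' = k -> w != w' ->
  size v = size v' -> gedge (k + size v) (w ++ v) (w' ++ v') = Some t ->
  gedge k w w' = Some t /\ all2 (I t) v v'.
Proof.
move=> sw sw' ww'; elim/last_ind: v v' t => [|v a IH] v' t.
  by case: v' => // _; rewrite !cats0 addn0.
case/lastP: v' => [|v' b]; first by rewrite size_rcons.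
rewrite !size_rcons => -[svv'] /=; rewrite addnS -!rcons_cat gedge_rcons;
  last 3 first.
- by rewrite size_cat sw.
- by rewrite size_cat sw' svv'.
- by rewrite eqseq_cat ?sw ?sw' // (negbTE ww').
case e: gedge => [s|//]; case: ifP => // Isab [<-].
by have [-> vv'] := IH v' s svv' e; rewrite all2_rcons // vv'.
Qed.

Hypothesis E_asym : forall x y, E x y -> ~~ E y x.

Lemma gedge_asym k w v t t' : gedge k w v = Some t -> gedge k v w = Some t' -> False.
Proof.
elim: k w v t t' => [//|k IH] w v t t' /=.
case: ifP => // _; rewrite orbC; case: ifP => // _.
case: (rev w) => [//|a rw]; case: (rev v) => [//|b rv].
rewrite [rev rv == _]eq_sym; case: ifP => _.
  by case Eab: (E a b); case Eba: (E b a) => //; have := E_asym Eab; rewrite Eba.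
case e: gedge => [s|//] _; case e': gedge => [s'|//] _; exact: IH e e'.
Qed.

Lemma Gadj_irrefl k w : ~~ Gadj k w w.
Proof.
by rewrite /Gadj /Gedge orbb; case e: gedge => [t|//]; case: (gedge_asym e e).
Qed.

Lemma Gadj_cat_lift n w w' v u : size w = n -> size w' = n -> w != w' ->
  size v = size u -> Gadj (n + size v) (w ++ v) (w' ++ u) ->
  exists t, gedge n w w' = Some t /\ all2 (I t) v u \/
            gedge n w' w = Some t /\ all2 (I t) u v.
Proof.
move=> sw sw' ww' svu; rewrite /Gadj /Gedge.
case e: gedge => [t|] /=.
  by exists t; left; exact: gedge_cat sw sw' ww' svu e.
case e': gedge => [t|//] _; exists t; right.
by rewrite svu in e'; apply: gedge_cat sw' sw _ (esym svu) e'; rewrite eq_sym.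
Qed.

Hypothesis gr1 : GR1 I.

Lemma lifted_neighbour_unique n w w' v u u' :
  size w = n -> size w' = n -> Gadj n w w' ->
  size v = size u -> size v = size u' ->
  Gadj (n + size v) (w ++ v) (w' ++ u) -> Gadj (n + size v) (w ++ v) (w' ++ u') ->
  u = u'.
Proof.
move=> sw sw' ww' svu svu'; have [I_fun I_inj] := gr1.
have neq_ww' : w != w' by apply: contraTneq ww' => ->; exact: Gadj_irrefl.
move=> /(Gadj_cat_lift sw sw' neq_ww' svu) [t [[e vu] | [e uv]]].
all: move=> /(Gadj_cat_lift sw sw' neq_ww' svu') [t' [[e' vu'] | [e' u'v]]].
- move: e' vu'; rewrite e => -[<-] vu'; exact: all2_functional (I_fun t) vu vu'.
- by case: (gedge_asym e e').
- by case: (gedge_asym e e').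
- move: e' u'v; rewrite e => -[<-] u'v; rewrite all2_flip in uv; rewrite all2_flip in u'v.
  by apply: all2_functional uv u'v => x y y' /=; apply: I_inj.
Qed.

Lemma Gpath_cons2 k w w' p :
  Gpath k [:: w, w' & p] = [&& size w == k, Gadj k w w' & Gpath k (w' :: p)].
Proof. by rewrite /Gpath /= -!andbA; case: (Gadj k w w'); rewrite /= ?andbF. Qed.

Lemma lifted_path_unique n m theta v1 vs vs' :
  Gpath n theta -> size v1 = m ->
  size vs = (size theta).-1 -> all (fun v => size v == m) vs ->
  size vs' = (size theta).-1 -> all (fun v => size v == m) vs' ->
  Gpath (n + m) [seq x.1 ++ x.2 | x <- zip theta (v1 :: vs)] ->
  Gpath (n + m) [seq x.1 ++ x.2 | x <- zip theta (v1 :: vs')] ->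
  vs = vs'.
Proof.
elim: theta v1 vs vs' => [|w [|w' theta] IH] v1 [|u us] [|u' us'] //=.
rewrite !Gpath_cons2 => /and3P[/eqP sw ww' path_w'] sv1 [sus] /andP[/eqP su aus]
  [sus'] /andP[/eqP su' aus'] /and3P[_ adj lift] /and3P[_ adj' lift'].
have /andP[/andP[/eqP sw' _] _] := path_w'.
rewrite -sv1 in adj adj'.
have uu' : u = u' by apply: lifted_neighbour_unique adj adj'; rewrite ?sv1 ?su ?su'.
by rewrite -uu' in lift' *; rewrite (IH u us us').
Qed.

End LiftedEdges.

Theorem proposition5p4 (S T : finType) (E : rel S) (typ : S -> S -> T)
    (I : T -> rel S) :
  is_IGS E typ I -> GR1 I -> GR2 E typ I -> GR3 I ->
  forall (n m : nat), 0 < n -> 0 < m ->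
  forall (theta : seq (seq S)), theta != [::] -> Gpath E typ I n theta ->
  forall (v1 : seq S), size v1 = m ->
  forall (vs vs' : seq (seq S)),
    size vs = (size theta).-1 -> all (fun v => size v == m) vs ->
    size vs' = (size theta).-1 -> all (fun v => size v == m) vs' ->
    Gpath E typ I (n + m) [seq x.1 ++ x.2 | x <- zip theta (v1 :: vs)] ->
    Gpath E typ I (n + m) [seq x.1 ++ x.2 | x <- zip theta (v1 :: vs')] ->
    vs = vs'.
Proof.
move=> [E_asym _ _ _] gr1 _ _ n m _ _ theta _ path_theta v1 sv1 vs vs'.
exact: (lifted_path_unique E_asym gr1 path_theta sv1).
Qed.
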